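(* Let $n,d\in\mathbb{N}$, $p\ge1$, $\Omega\subseteq\mathbb{R}^d$ compact, $z\in\mathbb{R}^d\setminus\Omega$. Let $a$ be uniform on $S^{d-1}$ and $b$ uniform on $S^{n-1}$, independently. For $X\in\mathcal{S}_{\le n}(\Omega)$ define $$S_z(X;a,b)=b\cdot\mathrm{sort}\big(a\cdot\rho_{(z)}(X)\big)\in\mathbb{R},$$ where $a\cdot\rho_{(z)}(X)\in\mathbb{R}^n$ is the vector of inner products of $a$ with the $n$ elements of $\rho_{(z)}(X)$ and $\mathrm{sort}$ sorts its entries in nondecreasing order. Then, with the metric $W_1^z$ on inputs and the absolute value on outputs, $S_z$ is uniformly Lipschitz and lower Lipschitz in expectation.
   Context: $\mathcal{S}_{\le n}(\Omega)$ is the set of multisets with at most $n$ elements from $\Omega$; $\rho_{(z)}$ pads a multiset with copies of $z$ to exactly $n$ elements; $W_1(\{\!\!\{ x_j\}\!\!\},\{\!\!\{ y_j\}\!\!\})=\min_{\tau\in S_n}\sum_j\|x_j-y_{\tau(j)}\|_1$ for $n$-element multisets and $W_1^z(S_1,S_2)=W_1(\rho_{(z)}(S_1),\rho_{(z)}(S_2))$. A parametric function $f(x;w)$ is uniformly Lipschitz if there is $L$ with $x\mapsto f(x;w)$ $L$-Lipschitz for all $w$; it is lower Lipschitz in expectation (for the given $p$) if there is $c>0$ with $c^p\le \mathbb{E}_{w}\left[\left(\frac{d_Y(f(x;w),f(x';w))}{d_X(x,x')}\right)^p\right]$ for all $x,x'$ with $d_X(x,x')>0$. *)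

From HB Require Import structures.
From mathcomp Require Import all_boot all_order all_algebra all_fingroup.
From mathcomp Require Import all_classical all_reals all_analysis.
Set Implicit Arguments. Unset Strict Implicit. Unset Printing Implicit Defensive.
Import Order.TTheory GRing.Theory Num.Theory.
Import numFieldNormedType.Exports.
Local Open Scope classical_set_scope.
Local Open Scope ring_scope.

Section Defs.
Variable R : realType.

Definition dotv (d : nat) (x y : 'rV[R]_d) : R := \sum_(k < d) x ord0 k * y ord0 k.
Definition enorm (d : nat) (x : 'rV[R]_d) : R := Num.sqrt (dotv x x).

Definition l1norm (d : nat) (x : 'rV[R]_d) : R := \sum_(k < d) `|x ord0 k|.

(** Multisets are represented by finite sequences (all notions below are
    invariant under permutation of the sequence).  S_{<= n}(Omega): *)
Definition multiset_le (d n : nat) (Omega : set 'rV[R]_d) (X : seq 'rV[R]_d) : Prop :=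
  (size X <= n)%N /\ (forall x, x \in X -> Omega x).

Definition pad (d n : nat) (z : 'rV[R]_d) (X : seq 'rV[R]_d) : seq 'rV[R]_d :=
  X ++ nseq (n - size X) z.

Definition W1cost (d n : nat) (z : 'rV[R]_d) (X Y : seq 'rV[R]_d) (s : 'S_n) : R :=
  \sum_(j < n) l1norm (nth z X j - nth z Y (s j)).
Definition W1 (d n : nat) (z : 'rV[R]_d) (X Y : seq 'rV[R]_d) : R :=
  \big[Num.min/W1cost z X Y (1%g : 'S_n)]_(s : 'S_n) W1cost z X Y s.
Definition W1z (d n : nat) (z : 'rV[R]_d) (X Y : seq 'rV[R]_d) : R :=
  W1 n z (pad n z X) (pad n z Y).

Definition Sz (d n : nat) (z : 'rV[R]_d) (X : seq 'rV[R]_d) (a : 'rV[R]_d) (b : 'rV[R]_n) : R :=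
  let s := path.sort <=%R [seq dotv a x | x <- pad n z X] in
  \sum_(i < n) b ord0 i * nth 0 s i.

Definition sphere (d : nat) : set 'rV[R]_d := [set a | enorm a = 1].

(** Lebesgue integral over R^d of a [0,+oo]-valued function, computed as the
    iterated one-dimensional Lebesgue integral (Tonelli). *)
Definition rcons_row (d : nat) (t : R) (y : 'rV[R]_d) : 'rV[R]_d.+1 :=
  \row_(i < d.+1) (if unlift ord0 i is Some j then y ord0 j else t).

Fixpoint lebRn (d : nat) : ('rV[R]_d -> \bar R) -> \bar R :=
  match d return ('rV[R]_d -> \bar R) -> \bar R with
  | 0 => fun g => g 0
  | d'.+1 => fun g =>
      (\int[@lebesgue_measure R]_(t in setT) lebRn (fun y => g (rcons_row t y)))%E
  end.

Definition ball_vol (d : nat) : \bar R :=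
  lebRn (fun x : 'rV[R]_d => if enorm x <= 1 then 1%E else 0%E).

(** Expectation of a nonnegative function of a, for a uniform on S^{d-1}
    (normalized surface measure = normalized cone measure:
     sigma(A) = lambda_d({t x | 0 <= t <= 1, x in A}) / lambda_d(B_d)). *)
Definition unif_sphere_E (d : nat) (h : 'rV[R]_d -> \bar R) : \bar R :=
  (lebRn (fun x : 'rV[R]_d => if (enorm x <= 1)%R then h ((enorm x)^-1 *: x) else 0%E)
   * ((fine (ball_vol d))^-1)%:E)%E.

Definition E_ab (d n : nat) (h : 'rV[R]_d -> 'rV[R]_n -> \bar R) : \bar R :=
  unif_sphere_E (fun a => unif_sphere_E (fun b => h a b)).

End Defs.

Arguments multiset_le {R d} n Omega X.
Arguments pad {R d} n z X.
Arguments W1 {R d} n z X Y.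
Arguments W1z {R d} n z X Y.
Arguments Sz {R d} n z X a b.
Arguments sphere {R} d a.
Arguments E_ab {R} d n h.

From HB Require Import structures.
From mathcomp Require Import all_boot all_order all_algebra all_fingroup.
From mathcomp Require Import all_classical all_reals all_analysis.
From mathcomp Require Import lra ring zify.
Import Order.TTheory GRing.Theory Num.Theory.
Import numFieldNormedType.Exports.
Local Open Scope classical_set_scope.
Local Open Scope ring_scope.
Set Implicit Arguments. Unset Strict Implicit. Unset Printing Implicit Defensive.

(* Upper bound: since [|b_i| <= 1], [|S_z(X) - S_z(X')|] is at most the l1 distance
   between the sorted projections of the padded multisets onto [a]; in one dimension the
   sorted matching is optimal, so this is at most [sum_j |a.x_j - a.x'_(tau j)|] for every
   [tau], and [|a.u - a.v| <= ||u - v||_1] as [|a_k| <= 1]; hence [L = 1].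
   Lower bound: only the [n^2] differences [w = x_i - x'_j] matter.  Counting grid points
   in the positive part of the unit ball shows that some small cube [C] there satisfies
   [|a.w| >= tau |w|_oo] for all of them and all [a] in [C]; on the normalized cube the
   sorted projections are then [(tau / d) W_1^z(X, X')] apart in l1 norm, and a second
   cube for [b] turns this into [|S_z(X) - S_z(X')| >= c W_1^z(X, X')].  The expectation
   is at least [c^p] times the sphere measure of the two normalized cubes. *)

Section RowVectors.
Variables (R : realType) (d : nat).
Implicit Types (a u v x : 'rV[R]_d).

Lemma dotvZ (c : R) x v : dotv (c *: x) v = c * dotv x v.
Proof. by rewrite /dotv mulr_sumr; apply: eq_bigr => k _; rewrite mxE mulrA. Qed.

Lemma dotvBl a u v : dotv (u - v) a = dotv u a - dotv v a.
Proof. by rewrite /dotv -sumrB; apply: eq_bigr => k _; rewrite !mxE mulrBl. Qed.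

Lemma dotvBr a u v : dotv a (u - v) = dotv a u - dotv a v.
Proof. by rewrite /dotv -sumrB; apply: eq_bigr => k _; rewrite !mxE mulrBr. Qed.

Lemma sqr_coord_le_dotv x k : x ord0 k ^+ 2 <= dotv x x.
Proof.
rewrite /dotv (bigD1 k) //= expr2 lerDl.
by apply: sumr_ge0 => i _; rewrite -expr2 sqr_ge0.
Qed.

Lemma normr_coord_le1 x : enorm x <= 1 -> forall k, `|x ord0 k| <= 1.
Proof.
rewrite /enorm -{1}sqrtr1 ler_sqrt // => x1 k.
rewrite -(expr_le1 (n := 2)) // real_normK ?num_real //.
exact: le_trans (sqr_coord_le_dotv x k) x1.
Qed.

Lemma dotv_dist_le_l1norm a u v : enorm a <= 1 ->
  `|dotv a u - dotv a v| <= l1norm (u - v).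
Proof.
move=> /normr_coord_le1 a1; rewrite -dotvBr /dotv /l1norm.
apply: le_trans (ler_norm_sum _ _ _) _; apply: ler_sum => k _.
by rewrite normrM -[leRHS]mul1r ler_wpM2r.
Qed.

Lemma normr_dotv_le_normalize x v : 0 < enorm x <= 1 ->
  `|dotv x v| <= `|dotv ((enorm x)^-1 *: x) v|.
Proof.
move=> /andP[x0 x1]; rewrite dotvZ normrM -[leLHS]mul1r.
by rewrite ler_wpM2r // ger0_norm ?invf_ge1 // invr_ge0 ltW.
Qed.

Definition supnorm v : R := \big[Num.max/0]_k `|v ord0 k|.

Lemma ler_supnorm v k : `|v ord0 k| <= supnorm v.
Proof. exact: (le_bigmax 0 (fun k => `|v ord0 k|) k). Qed.

Lemma supnorm_ge0 v : 0 <= supnorm v.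
Proof. exact: bigmax_ge_id. Qed.

(* Junk value: for [d = 0] the left-hand side is [0] since [0^-1 = 0]. *)
Lemma l1norm_le_supnorm (t : R) v : 0 <= t -> t / d%:R * l1norm v <= t * supnorm v.
Proof.
move=> t0; have [d0|d0] := posnP d.
  by rewrite [X in X%:R]d0 invr0 mulr0 mul0r mulr_ge0 ?supnorm_ge0.
rewrite -mulrA ler_wpM2l // ler_pdivrMl ?ltr0n // /l1norm.
rewrite mulr_natl -[X in supnorm v *+ X]card_ord -sumr_const.
by apply: ler_sum => k _; exact: ler_supnorm.
Qed.

End RowVectors.

Lemma supnorm_attained (R : realType) m (v : 'rV[R]_m.+1) :
  exists k, supnorm v = `|v ord0 k|.
Proof. by eexists; rewrite /supnorm (bigmax_eq_arg 0 ord0). Qed.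

Section IteratedIntegral.
Variable R : realType.
Local Notation mu := (@lebesgue_measure R).

(* No measurability is needed: both integrals are suprema over simple functions below the integrand. *)
Lemma ge0_le_integralT (f g : R -> \bar R) :
  (forall x, 0 <= f x)%E -> (forall x, f x <= g x)%E ->
  (\int[mu]_(x in setT) f x <= \int[mu]_(x in setT) g x)%E.
Proof.
move=> f0 fg; rewrite !ge0_integralTE // => [|x]; last exact: le_trans (f0 x) (fg x).
apply/ge_ereal_sup => _ [h hf <-]; apply: ereal_sup_ubound; exists h => // x.
exact: le_trans (hf x) (fg x).
Qed.

Lemma integral_itv_cst (lo r K : R) : 0 <= r ->
  (\int[mu]_(t in setT) (if (lo <= t <= lo + r)%R then K%:E else 0%E) = (K * r)%:E)%E.
Proof.
move=> r0; transitivity (\int[mu]_(t in `[lo, (lo + r)%R]) (cst K%:E) t)%E.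
  by rewrite [RHS]integral_mkcond; apply: eq_integral => t _; rewrite /patch mem_setE in_itv.
rewrite integral_cst //= lebesgue_measure_itv /= lte_fin.
have [_|] := ltrP lo (lo + r); first by rewrite -EFinD addrAC subrr add0r.
rewrite gerDl => r_le0; have -> : r = 0 by apply/le_anti/andP.
by rewrite mulr0 mule0.
Qed.

Lemma lebRn_ge0 d (f : 'rV[R]_d -> \bar R) : (forall x, 0 <= f x)%E -> (0 <= lebRn f)%E.
Proof.
elim: d f => [|d IH] f f0 /=; first exact: f0.
by apply: integral_ge0 => t _; exact: IH.
Qed.

Lemma le_lebRn d (f g : 'rV[R]_d -> \bar R) :
  (forall x, 0 <= f x)%E -> (forall x, f x <= g x)%E -> (lebRn f <= lebRn g)%E.
Proof.
elim: d f g => [|d IH] f g f0 fg /=; first exact: fg.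
by apply: ge0_le_integralT => t; [apply: lebRn_ge0 | apply: IH].
Qed.

Lemma lebRn0 d : lebRn (fun _ : 'rV[R]_d => 0%E) = 0%E.
Proof.
by elim: d => [|d IH] //=; rewrite (eq_integral (cst 0%E)) ?integral0.
Qed.

Definition in_cube d (lo : 'rV[R]_d) (r : R) (x : 'rV[R]_d) : bool :=
  [forall k, lo ord0 k <= x ord0 k <= lo ord0 k + r].

Lemma rcons_row0 d (t : R) (y : 'rV[R]_d) : rcons_row t y ord0 ord0 = t.
Proof. by rewrite mxE unlift_none. Qed.

Lemma rcons_rowS d (t : R) (y : 'rV[R]_d) k : rcons_row t y ord0 (lift ord0 k) = y ord0 k.
Proof. by rewrite mxE liftK. Qed.

Lemma in_cube_rcons d (lo : 'rV[R]_d.+1) r t (y : 'rV[R]_d) :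
  in_cube lo r (rcons_row t y) =
  (lo ord0 ord0 <= t <= lo ord0 ord0 + r) && in_cube (\row_k lo ord0 (lift ord0 k)) r y.
Proof.
apply/forallP/andP => [H|[H0 /forallP H] k].
  split; first by have := H ord0; rewrite rcons_row0.
  by apply/forallP => k; have := H (lift ord0 k); rewrite rcons_rowS !mxE.
have [j ->|->] := unliftP ord0 k; last by rewrite rcons_row0.
by rewrite rcons_rowS; have := H j; rewrite !mxE.
Qed.

Lemma lebRn_cube d (lo : 'rV[R]_d) (r K : R) : 0 <= r ->
  lebRn (fun x => if in_cube lo r x then K%:E else 0%E) = (K * r ^+ d)%:E.
Proof.
elim: d lo K => [|d IH] lo K r0 /=.
  by rewrite expr0 mulr1; have -> : in_cube lo r 0 by apply/forallP => -[].
rewrite exprSr mulrA -(integral_itv_cst (lo ord0 ord0)) //; apply: eq_integral => t _.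
under eq_fun => y do rewrite in_cube_rcons.
by case: ifP => _; [exact: IH | exact: lebRn0].
Qed.

Lemma ball_vol_bounds m (lo : 'rV[R]_m) (r : R) : 0 < r ->
  (forall x, in_cube lo r x -> enorm x <= 1) ->
  exists v : R, ball_vol R m = v%:E /\ r ^+ m <= v /\ v <= 2 ^+ m.
Proof.
move=> r0 cube_ball.
have vol_le : (ball_vol R m <= (1 * 2 ^+ m)%:E)%E.
  rewrite -(lebRn_cube (const_mx (-1)) 1) //; apply: le_lebRn => x; first by case: ifP.
  case: ifP => [/normr_coord_le1 x1|_]; last by case: ifP.
  have -> // : in_cube (const_mx (-1)) 2 x.
  by apply/forallP => k; rewrite mxE; have := x1 k; rewrite ler_norml; lra.
have vol_ge : ((1 * r ^+ m)%:E <= ball_vol R m)%E.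
  rewrite /ball_vol -(lebRn_cube lo 1 (ltW r0)); apply: le_lebRn => x; first by case: ifP.
  by case: ifP => [/cube_ball ->|_] //; case: ifP.
move: vol_le vol_ge; case: (ball_vol R m) => [v| |] //=; rewrite !lee_fin !mul1r.
by exists v.
Qed.

Lemma unif_sphere_E_ge0 m (h : 'rV[R]_m -> \bar R) :
  (forall x, 0 <= h x)%E -> (0 <= unif_sphere_E h)%E.
Proof.
move=> h0; apply: mule_ge0; first by apply: lebRn_ge0 => x; case: ifP.
by rewrite lee_fin invr_ge0 fine_ge0 // lebRn_ge0 // => x; case: ifP.
Qed.

(* Normalizing a cube inside the unit ball gives a patch of the sphere whose cone
   contains the cube, so the patch has measure at least [r ^+ m / 2 ^+ m]. *)
Lemma unif_sphere_E_ge_cube m (h : 'rV[R]_m -> \bar R) (lo : 'rV[R]_m) (r K : R) :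
  0 < r -> 0 <= K -> (forall x, 0 <= h x)%E ->
  (forall x, in_cube lo r x -> enorm x <= 1 /\ (K%:E <= h ((enorm x)^-1 *: x))%E) ->
  ((K * r ^+ m / 2 ^+ m)%:E <= unif_sphere_E h)%E.
Proof.
move=> r0 K0 h0 cube_h.
have [v [volE [rv v2]]] := ball_vol_bounds r0 (fun x cx => (cube_h x cx).1).
have v0 : 0 < v by apply: lt_le_trans rv; apply: exprn_gt0.
have cube_le : ((K * r ^+ m)%:E <= lebRn (fun x : 'rV[R]_m =>
    if (enorm x <= 1)%R then h ((enorm x)^-1 *: x) else 0%E))%E.
  rewrite -(lebRn_cube lo K (ltW r0)); apply: le_lebRn => x; first by case: ifP.
  by case: ifP => [/cube_h [-> //]|_]; case: ifP.
rewrite /unif_sphere_E volE /= EFinM; apply: lee_pmul => //.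
  by rewrite lee_fin mulr_ge0 // exprn_ge0 // ltW.
by rewrite lee_fin lef_pV2 ?posrE ?exprn_gt0.
Qed.

End IteratedIntegral.

Lemma natr_dist_ge1 (R : realType) (a b : nat) : a != b -> 1 <= `|a%:R - b%:R : R|.
Proof.
move=> ab; apply: norm_intr_ge1; first by rewrite rpredB ?natr_int.
by rewrite subr_eq0 eqr_nat.
Qed.

Section Grid.
Variables (R : realType) (m N : nat).

(* Grid points have coordinates in [[h, (N + 1) h]] with [h = 1 / ((m + 1) (N + 2))],
   so cubes of side [grid_rad] at grid points lie in the positive part of the unit
   ball, and moving inside such a cube changes [dotv _ w] by at most
   [(m + 1) grid_rad |w|_oo = grid_tau |w|_oo]. *)
Definition grid_step : R := ((m.+1 * N.+2)%:R)^-1.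
Definition grid_pt (g : {ffun 'I_m.+1 -> 'I_N.+1}) : 'rV[R]_m.+1 :=
  \row_k (((g k : nat)%:R + 1) * grid_step).
Definition grid_rad : R := grid_step / (4 * m.+1%:R).
Definition grid_tau : R := grid_step / 4.

Lemma grid_step_gt0 : 0 < grid_step.
Proof. by rewrite invr_gt0 ltr0n muln_gt0. Qed.

Lemma grid_rad_gt0 : 0 < grid_rad.
Proof. by rewrite divr_gt0 ?grid_step_gt0 // mulr_gt0 // ltr0n. Qed.

Lemma grid_tau_gt0 : 0 < grid_tau.
Proof. by rewrite divr_gt0 ?grid_step_gt0. Qed.

Implicit Types (g : {ffun 'I_m.+1 -> 'I_N.+1}) (x w : 'rV[R]_m.+1).

Lemma cube_grid_coord g x : in_cube (grid_pt g) grid_rad x ->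
  forall k, grid_step <= x ord0 k <= (m.+1%:R)^-1.
Proof.
move=> /forallP cube_x k; have := cube_x k; rewrite !mxE => /andP[lo_x x_hi].
have h0 := grid_step_gt0.
have gN : ((g k : nat)%:R : R) <= N%:R by rewrite ler_nat -ltnS.
have rad_le : grid_rad <= grid_step.
  rewrite ler_pdivrMr ?mulr_gt0 ?ltr0n // ler_peMr ?ltW //.
  have : (1 : R) <= m.+1%:R by rewrite ler1n.
  lra.
have -> : (m.+1%:R : R)^-1 = grid_step * N.+2%:R.
  by rewrite /grid_step natrM invfM -mulrA mulVf ?mulr1 // pnatr_eq0.
have gh_ge0 : 0 <= (g k : nat)%:R * grid_step by rewrite mulr_ge0 ?ler0n ?ltW.
have gh_le : (g k : nat)%:R * grid_step <= N%:R * grid_step := ler_wpM2r (ltW h0) gN.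
rewrite -addn2 natrD; apply/andP; split; lra.
Qed.

Lemma cube_grid_enorm g x : in_cube (grid_pt g) grid_rad x -> 0 < enorm x <= 1.
Proof.
move=> /cube_grid_coord x_bd; have h0 := grid_step_gt0.
apply/andP; split.
  rewrite sqrtr_gt0; apply: lt_le_trans (sqr_coord_le_dotv x ord0).
  by have /andP[x0 _] := x_bd ord0; rewrite exprn_gt0 // (lt_le_trans h0).
rewrite -sqrtr1 ler_wsqrtr //; apply: le_trans (_ : \sum_(k < m.+1) (m.+1%:R : R)^-1 <= 1).
  apply: ler_sum => k _; have /andP[lo_x x_hi] := x_bd k.
  have : (m.+1%:R : R)^-1 <= 1 by rewrite invf_le1 ?ler1n.
  move: lo_x x_hi; set y := x ord0 k; set c := _^-1 => lo_x x_hi c1; nra.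
by rewrite sumr_const card_ord -[leLHS]mulr_natr mulVf ?pnatr_eq0.
Qed.

Lemma dotv_cube_grid_dist g x w : in_cube (grid_pt g) grid_rad x ->
  `|dotv x w - dotv (grid_pt g) w| <= grid_tau * supnorm w.
Proof.
move=> /forallP cube_x.
have -> : grid_tau * supnorm w = \sum_(k < m.+1) grid_rad * supnorm w.
  rewrite sumr_const card_ord -[RHS]mulr_natr /grid_tau /grid_rad; field.
  by rewrite addrC natr1 pnatr_eq0.
rewrite -dotvBl; apply: le_trans (ler_norm_sum _ _ _) _; apply: ler_sum => k _.
have := cube_x k; rewrite !mxE normrM; move=> /andP[lo_x x_hi].
rewrite ger0_norm ?subr_ge0 // ler_pM ?subr_ge0 ?ler_supnorm //; lra.
Qed.

Lemma card_grid_small w :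
  (#|[set g | (`|dotv (grid_pt g) w| < grid_step / 2 * supnorm w)%R]%SET| <= N.+1 ^ m)%N.
Proof.
have h0 := grid_step_gt0.
have [k0 wk0] := supnorm_attained w.
pose drop_k0 g := [ffun j : 'I_m => g (lift k0 j)].
rewrite -(@card_in_imset _ _ drop_k0); last first.
  move=> g g'; rewrite !inE => small_g small_g' /ffunP eq_off.
  have eq_lift k : k != k0 -> g k = g' k.
    by have [j -> _|-> /[!eqxx]//] := unliftP k0 k; have := eq_off j; rewrite !ffunE.
  apply/ffunP => k; have [->|] := eqVneq k k0; last exact: eq_lift.
  apply/eqP; apply: contraT => neq.
  have dot_diff : dotv (grid_pt g) w - dotv (grid_pt g') w =
      ((g k0 : nat)%:R - (g' k0 : nat)%:R) * grid_step * w ord0 k0.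
    rewrite -dotvBl /dotv (bigD1 k0) //= big1 ?addr0 => [|j /eq_lift e]; last by rewrite !mxE e subrr mul0r.
    by rewrite !mxE; ring.
  have : grid_step * supnorm w <= `|dotv (grid_pt g) w - dotv (grid_pt g') w|.
    rewrite dot_diff !normrM wk0 (gtr0_norm h0) ler_wpM2r // -[leLHS]mul1r.
    by rewrite ler_wpM2r ?natr_dist_ge1 // ltW.
  have := ler_normB (dotv (grid_pt g) w) (dotv (grid_pt g') w).
  move: small_g small_g'; rewrite mulrAC; lra.
by apply: leq_trans (max_card _) _; rewrite card_ffun !card_ord.
Qed.

Lemma exists_grid_pt_large (I : finType) (w : I -> 'rV[R]_m.+1) : (#|I| <= N)%N ->
  exists g, forall i, grid_step / 2 * supnorm (w i) <= `|dotv (grid_pt g) (w i)|.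
Proof.
move=> card_I.
pose small i := [set g | `|dotv (grid_pt g) (w i)| < grid_step / 2 * supnorm (w i)]%SET.
suff /subsetPn[g _ g_large] : ~~ ([set: {ffun 'I_m.+1 -> 'I_N.+1}] \subset \bigcup_i small i)%SET.
  exists g => i; rewrite leNgt; apply: contra g_large => gi.
  by apply/bigcupP; exists i; rewrite ?inE.
apply/negP => /subset_leq_card; rewrite cardsT card_ffun !card_ord => cover.
have small_le : (\sum_i #|small i| <= #|I| * N.+1 ^ m)%N.
  by rewrite -sum_nat_const; apply: leq_sum => i _; exact: card_grid_small.
have := leq_trans cover (leq_trans (unstable.card_big_setU _ _ _) small_le).
rewrite expnS; have : (0 < N.+1 ^ m)%N by rewrite expn_gt0.
nia.
Qed.

Lemma exists_grid_cube_large (I : finType) (w : I -> 'rV[R]_m.+1) : (#|I| <= N)%N ->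
  exists g, forall x, in_cube (grid_pt g) grid_rad x ->
    forall i, grid_tau * supnorm (w i) <= `|dotv x (w i)|.
Proof.
move=> /(exists_grid_pt_large w)[g g_large]; exists g => x cube_x i.
have near := dotv_cube_grid_dist (w i) cube_x; have large := g_large i.
have tri := ler_normD (dotv x (w i)) (dotv (grid_pt g) (w i) - dotv x (w i)).
rewrite addrC subrK distrC in tri; move: near large.
rewrite /grid_tau -!(mulrAC _ (supnorm (w i))); set hs := grid_step * _; lra.
Qed.

End Grid.

Section SortedMatching.
Variable R : realType.
Implicit Types (P Q : seq (R * R)) (s : seq R).

Definition match_cost P : R := \sum_(q <- P) `|q.1 - q.2|.

Lemma match_cost_cons q P : match_cost (q :: P) = `|q.1 - q.2| + match_cost P.
Proof. exact: big_cons. Qed.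

Lemma match_cost_rcons P q : match_cost (rcons P q) = match_cost P + `|q.1 - q.2|.
Proof. by rewrite /match_cost -cats1 big_cat big_seq1. Qed.

Lemma seq_argmax (T : eqType) (f : T -> R) (s : seq T) :
  s != [::] -> exists2 x, x \in s & forall y, y \in s -> f y <= f x.
Proof.
elim: s => [//|a s IH] _; have [->|/IH[x xs x_max]] := eqVneq s [::].
  by exists a => [|y]; rewrite ?mem_seq1 // => /eqP->.
have [ax|xa] := lerP (f a) (f x).
  exists x => [|y]; first by rewrite in_cons xs orbT.
  by rewrite in_cons => /orP[/eqP->|/x_max].
exists a => [|y]; first exact: mem_head.
by rewrite in_cons => /orP[/eqP->//|/x_max/le_trans]; apply; exact: ltW.
Qed.

Lemma sort_cons_max s x : all (<=%R^~ x) s -> sort <=%R (x :: s) = rcons (sort <=%R s) x.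
Proof.
move=> s_le; apply: (sorted_eq le_trans le_anti); first exact/sort_sorted/le_total.
  have : all (<=%R^~ x) (sort <=%R s) by rewrite all_sort.
  case: (sort <=%R s) (sort_sorted le_total s) => [//|a l] l_path /allP l_le.
  by rewrite /= rcons_path l_le ?mem_last ?andbT.
by rewrite perm_sort perm_sym perm_rcons perm_cons perm_sort.
Qed.

Lemma uncross_le (x y a b : R) : b <= x -> a <= y ->
  `|x - y| + `|b - a| <= `|x - a| + `|b - y|.
Proof.
move=> bx ay; have := ler_norm (x - a); have := ler_norm (a - x).
have := ler_norm (b - y); have := ler_norm (y - b); rewrite (distrC a) (distrC y).
by case: (lerP 0 (x - y)) => [/ger0_norm->|/ltr0_norm->];
  case: (lerP 0 (b - a)) => [/ger0_norm->|/ltr0_norm->]; lra.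
Qed.

(* Pair a maximal first coordinate [x] with a maximal second coordinate [y] and uncross. *)
Lemma match_peel_max P : P != [::] -> exists x y Q,
  [/\ size Q = (size P).-1, perm_eq (unzip1 P) (x :: unzip1 Q),
      perm_eq (unzip2 P) (y :: unzip2 Q),
      all (<=%R^~ x) (unzip1 Q) /\ all (<=%R^~ y) (unzip2 Q) &
      `|x - y| + match_cost Q <= match_cost P].
Proof.
move=> P0; have [[x a] xaP x_max] := seq_argmax (fun q => q.1) P0.
have [[b y] byP y_max] := seq_argmax (fun q => q.2) P0.
have P_xa := perm_to_rem xaP.
have [eq_by|neq_by] := eqVneq (b, y) (x, a).
  move: y_max; case: eq_by => _ -> y_max; exists x, a, (rem (x, a) P); split.
  - by rewrite size_rem.
  - by have := perm_map fst P_xa.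
  - by have := perm_map snd P_xa.
  - by split; apply/allP => _ /mapP[q /mem_rem qP ->]; [exact: x_max | exact: y_max].
  by rewrite /match_cost [leRHS](perm_big _ P_xa) big_cons.
set Q := rem (b, y) (rem (x, a) P).
have P_xa_by : perm_eq P ((x, a) :: (b, y) :: Q).
  by apply: perm_trans P_xa _; rewrite perm_cons perm_to_rem // rem_mem.
have QP q : q \in Q -> q \in P by move=> /mem_rem/mem_rem.
exists x, y, ((b, a) :: Q); split.
- by rewrite (perm_size P_xa_by).
- by have := perm_map fst P_xa_by.
- apply: perm_trans (perm_map snd P_xa_by) _ => /=.
  by rewrite -[[:: a, y & _]]/([:: a] ++ [:: y] ++ _) perm_catCA.
- split; apply/allP => _ /mapP[q /[!in_cons]/orP[/eqP-> ->|/QP qP ->]].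
  + exact: x_max byP.
  + exact: x_max.
  + exact: y_max xaP.
  + exact: y_max.
have -> : match_cost P = `|x - a| + (`|b - y| + match_cost Q).
  by rewrite /match_cost (perm_big _ P_xa_by) !big_cons.
rewrite match_cost_cons !addrA lerD2r.
exact: uncross_le (x_max _ byP) (y_max _ xaP).
Qed.

Lemma match_cost_sort_le P :
  match_cost (zip (sort <=%R (unzip1 P)) (sort <=%R (unzip2 P))) <= match_cost P.
Proof.
move sP : (size P) => n; elim: n P sP => [|n IH] P sP; first by case: P sP.
have /match_peel_max[x [y [Q [sQ P1 P2 [Q1 Q2] cost_le]]]] : P != [::] by case: P sP.
rewrite (perm_sort_leP _ _ P1) (perm_sort_leP _ _ P2) !sort_cons_max //.
rewrite zip_rcons ?size_sort ?size_map // match_cost_rcons.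
by apply: le_trans cost_le; rewrite addrC lerD2l IH // sQ sP.
Qed.

End SortedMatching.

Section Wasserstein.
Variables (R : realType) (d n : nat) (z : 'rV[R]_d).
Implicit Types (a : 'rV[R]_d) (xs ys : seq 'rV[R]_d).

Definition proj_sort a xs : seq R := sort <=%R [seq dotv a x | x <- xs].

Lemma size_proj_sort a xs : size (proj_sort a xs) = size xs.
Proof. by rewrite size_sort size_map. Qed.

Lemma size_pad xs : (size xs <= n)%N -> size (pad n z xs) = n.
Proof. by move=> xs_le; rewrite size_cat size_nseq subnKC. Qed.

Lemma Sz_sub xs ys a (b : 'rV[R]_n) : Sz n z xs a b - Sz n z ys a b =
  \sum_(i < n) b ord0 i * (nth 0 (proj_sort a (pad n z xs)) i - nth 0 (proj_sort a (pad n z ys)) i).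
Proof. by rewrite /Sz -sumrB; apply: eq_bigr => i _; rewrite mulrBr. Qed.

Lemma sum_nth_zip (s t : seq R) : size s = n -> size t = n ->
  \sum_(i < n) `|nth 0 s i - nth 0 t i| = match_cost (zip s t).
Proof.
move=> ss st; rewrite /match_cost (big_nth (0, 0)) size_zip ss st minnn big_mkord.
by apply: eq_bigr => i _; rewrite nth_zip ?ss ?st.
Qed.

Lemma W1_le_cost xs ys (s : 'S_n) : W1 n z xs ys <= W1cost z xs ys s.
Proof. exact: bigmin_le. Qed.

Lemma W1_le_perm_cost xs ys xs' ys' : size xs = n -> size ys = n ->
  perm_eq xs' xs -> perm_eq ys' ys ->
  W1 n z xs ys <= \sum_(i < n) l1norm (nth z xs' i - nth z ys' i).
Proof.
move=> /eqP sx /eqP sy px py.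
have /tuple_permP[p ->] : perm_eq xs' (Tuple sx) by [].
have /tuple_permP[q ->] : perm_eq ys' (Tuple sy) by [].
apply: le_trans (W1_le_cost xs ys (p^-1 * q)%g) _.
rewrite /W1cost (reindex_inj (@perm_inj _ p)) le_eqVlt; apply/orP; left; apply/eqP.
by apply: eq_bigr => i _; rewrite -!tnth_nth !tnth_mktuple !(tnth_nth z) permM permK.
Qed.

Lemma match_proj_sort_le_W1cost a xs ys (s : 'S_n) : enorm a <= 1 ->
  size xs = n -> size ys = n ->
  match_cost (zip (proj_sort a xs) (proj_sort a ys)) <= W1cost z xs ys s.
Proof.
move=> a1 /eqP sx /eqP sy; set tx := Tuple sx; set ty := Tuple sy.
pose P := [seq (dotv a (tnth tx j), dotv a (tnth ty (s j))) | j <- enum 'I_n].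
have P1 : unzip1 P = [seq dotv a x | x <- xs].
  transitivity [seq dotv a x | x <- tval tx]; last by [].
  by rewrite /unzip1 -map_comp -[in RHS]map_tnth_enum -map_comp.
have P2 : perm_eq (unzip2 P) [seq dotv a y | y <- ys].
  have -> : unzip2 P = map (dotv a) [tuple tnth ty (s j) | j < n].
    by rewrite /unzip2 -!map_comp.
  have : perm_eq [tuple tnth ty (s j) | j < n] ty by apply/tuple_permP; exists s.
  exact: perm_map.
have := match_cost_sort_le P; rewrite P1 (perm_sort_leP _ _ P2) => /le_trans; apply.
rewrite /match_cost /W1cost big_map big_enum /=; apply: ler_sum => j _.
by rewrite !(tnth_nth z); exact: dotv_dist_le_l1norm.
Qed.

Lemma Sz_lipschitz xs ys a (b : 'rV[R]_n) : (size xs <= n)%N -> (size ys <= n)%N ->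
  enorm a = 1 -> enorm b = 1 -> `|Sz n z xs a b - Sz n z ys a b| <= W1z n z xs ys.
Proof.
move=> /size_pad sx /size_pad sy a1 b1.
have ssx : size (proj_sort a (pad n z xs)) = n by rewrite size_proj_sort.
have ssy : size (proj_sort a (pad n z ys)) = n by rewrite size_proj_sort.
rewrite Sz_sub; apply: le_trans (ler_norm_sum _ _ _) _.
apply: le_trans (_ : _ <= \sum_(i < n) `|nth 0 (proj_sort a (pad n z xs)) i -
                                        nth 0 (proj_sort a (pad n z ys)) i|) _.
  apply: ler_sum => i _; rewrite normrM -[leRHS]mul1r ler_wpM2r //.
  by apply: normr_coord_le1; rewrite b1.
rewrite sum_nth_zip //; apply: le_bigmin => [|s _];
  by apply: match_proj_sort_le_W1cost; rewrite ?a1.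
Qed.

End Wasserstein.

Section LowerBound.
Variables (R : realType) (d n : nat) (z : 'rV[R]_d).
Implicit Types (a : 'rV[R]_d) (xs ys : seq 'rV[R]_d).

Lemma W1_le_proj_sort (t : R) a xs ys : size xs = n -> size ys = n -> 0 <= t ->
  (forall u v, u \in xs -> v \in ys -> t * supnorm (u - v) <= `|dotv a (u - v)|) ->
  t / d%:R * W1 n z xs ys <=
  \sum_(i < n) `|nth 0 (proj_sort a xs) i - nth 0 (proj_sort a ys) i|.
Proof.
move=> sx sy t0 a_large; rewrite /proj_sort !sort_map.
set xs' := sort _ xs; set ys' := sort _ ys.
have px : perm_eq xs' xs by rewrite perm_sort.
have py : perm_eq ys' ys by rewrite perm_sort.
have t_d0 : 0 <= t / d%:R by rewrite divr_ge0.
apply: le_trans (ler_wpM2l t_d0 (W1_le_perm_cost z sx sy px py)) _.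
rewrite mulr_sumr; apply: ler_sum => i _.
rewrite !(nth_map z) ?(perm_size px) ?(perm_size py) ?sx ?sy // -dotvBr.
apply: le_trans (l1norm_le_supnorm _ t0) (a_large _ _ _ _).
  by rewrite -(perm_mem px) mem_nth ?(perm_size px) ?sx.
by rewrite -(perm_mem py) mem_nth ?(perm_size py) ?sy.
Qed.

Definition proj_sort_sub a xs ys : 'rV[R]_n :=
  \row_i (nth 0 (proj_sort a xs) i - nth 0 (proj_sort a ys) i).

Lemma Sz_sub_ge xs ys a (y : 'rV[R]_n) (ta tb : R) :
  (size xs <= n)%N -> (size ys <= n)%N -> 0 <= ta -> 0 <= tb -> 0 < enorm y <= 1 ->
  (forall u v, u \in pad n z xs -> v \in pad n z ys ->
     ta * supnorm (u - v) <= `|dotv a (u - v)|) ->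
  tb * supnorm (proj_sort_sub a (pad n z xs) (pad n z ys)) <=
    `|dotv y (proj_sort_sub a (pad n z xs) (pad n z ys))| ->
  tb / n%:R * (ta / d%:R * W1z n z xs ys) <=
    `|Sz n z xs a ((enorm y)^-1 *: y) - Sz n z ys a ((enorm y)^-1 *: y)|.
Proof.
move=> /(size_pad z) sx /(size_pad z) sy ta0 tb0 y_bd a_large y_large.
set w := proj_sort_sub a _ _ in y_large *; rewrite Sz_sub.
have -> : \sum_(i < n) ((enorm y)^-1 *: y) ord0 i * (nth 0 (proj_sort a (pad n z xs)) i -
    nth 0 (proj_sort a (pad n z ys)) i) = dotv ((enorm y)^-1 *: y) w.
  by apply: eq_bigr => i _; rewrite [w _ _]mxE.
apply: le_trans (normr_dotv_le_normalize w y_bd).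
apply: le_trans (le_trans (l1norm_le_supnorm w tb0) y_large).
rewrite ler_wpM2l ?divr_ge0 // /W1z; apply: le_trans (W1_le_proj_sort sx sy ta0 a_large) _.
by rewrite le_eqVlt; apply/orP; left; apply/eqP/eq_bigr => i _; rewrite mxE.
Qed.

End LowerBound.

Lemma Sz_lower_lipschitz_E (R : realType) n' d' (p : R) (z : 'rV[R]_d'.+1) : 1 <= p ->
  exists c : R, 0 < c /\ forall xs ys : seq 'rV[R]_d'.+1,
    (size xs <= n'.+1)%N -> (size ys <= n'.+1)%N -> 0 < W1z n'.+1 z xs ys ->
    ((c `^ p)%:E <= E_ab d'.+1 n'.+1 (fun a b =>
        ((`|Sz n'.+1 z xs a b - Sz n'.+1 z ys a b| / W1z n'.+1 z xs ys) `^ p)%:E))%E.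
Proof.
move=> p1; set n := n'.+1; set d := d'.+1.
set ta := grid_tau R d' (n * n); set ra := grid_rad R d' (n * n).
set tb := grid_tau R n' 1; set rb := grid_rad R n' 1.
have ta0 : 0 < ta := grid_tau_gt0 R d' (n * n).
have tb0 : 0 < tb := grid_tau_gt0 R n' 1.
have ra0 : 0 < ra := grid_rad_gt0 R d' (n * n).
have rb0 : 0 < rb := grid_rad_gt0 R n' 1.
set c0 := tb / n%:R * (ta / d%:R).
have c00 : 0 < c0 by rewrite !mulr_gt0 ?invr_gt0 ?ltr0n.
set V := rb ^+ n / 2 ^+ n * ra ^+ d / 2 ^+ d.
have V0 : 0 < V by rewrite !mulr_gt0 ?invr_gt0 ?exprn_gt0.
exists (c0 * V `^ p^-1); split=> [|xs ys sx sy W0]; first by rewrite mulr_gt0 ?powR_gt0.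
have -> : (c0 * V `^ p^-1) `^ p = (c0 `^ p * rb ^+ n / 2 ^+ n) * ra ^+ d / 2 ^+ d.
  rewrite powRM ?ltW ?powR_gt0 // -powRrM mulVf ?powRr1 ?ltW ?(gt_eqF (lt_le_trans ltr01 p1)) //.
  by rewrite /V !mulrA.
pose wa (ij : 'I_n * 'I_n) := nth z (pad n z xs) ij.1 - nth z (pad n z ys) ij.2.
have card_pairs : (#|{: 'I_n * 'I_n}| <= n * n)%N by rewrite card_prod !card_ord.
have [ga a_large] := exists_grid_cube_large wa card_pairs.
apply: (unif_sphere_E_ge_cube (lo := grid_pt R ga)) ra0 _ _ _ => [||x cube_x].
- by rewrite !mulr_ge0 ?invr_ge0 ?powR_ge0 ?exprn_ge0 ?ltW.
- by move=> x; apply: unif_sphere_E_ge0 => y; rewrite lee_fin powR_ge0.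
have /andP[x0 x1] := cube_grid_enorm cube_x; split=> //.
set a := (enorm x)^-1 *: x.
have card_unit1 : (#|{: unit}| <= 1)%N by rewrite card_unit.
have [gb b_large] := exists_grid_cube_large
  (fun _ : unit => proj_sort_sub n a (pad n z xs) (pad n z ys)) card_unit1.
apply: (unif_sphere_E_ge_cube (lo := grid_pt R gb)) rb0 _ _ _ => [||y cube_y]; first by rewrite powR_ge0.
  by move=> y; rewrite lee_fin powR_ge0.
have /andP[y0 y1] := cube_grid_enorm cube_y; split=> //.
have key : c0 <= `|Sz n z xs a ((enorm y)^-1 *: y) - Sz n z ys a ((enorm y)^-1 *: y)|
                   / W1z n z xs ys.
  rewrite ler_pdivlMr // -mulrA.
  apply: Sz_sub_ge (ltW ta0) (ltW tb0) _ _ (b_large y cube_y tt) => //; first by rewrite y0.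
  move=> u v /(nthP z)[i i_lt <-] /(nthP z)[j j_lt <-].
  rewrite size_pad // in i_lt; rewrite size_pad // in j_lt.
  apply: le_trans (a_large x cube_x (Ordinal i_lt, Ordinal j_lt)) _.
  by apply: normr_dotv_le_normalize; rewrite x0.
rewrite lee_fin; apply: ge0_ler_powR; rewrite ?nnegrE ?(ltW c00) //; first lra.
exact: le_trans (ltW c00) key.
Qed.

Theorem mainTheorem4 (R : realType) (n d : nat) (p : R)
  (Omega : set 'rV[R]_d) (z : 'rV[R]_d) :
  (1 <= n)%N -> (1 <= d)%N -> 1 <= p ->
  compact Omega -> ~ Omega z ->
  (* uniformly Lipschitz *)
  (exists L : R, forall (a : 'rV[R]_d) (b : 'rV[R]_n), sphere d a -> sphere n b ->
     forall X X' : seq 'rV[R]_d, multiset_le n Omega X -> multiset_le n Omega X' ->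
       `|Sz n z X a b - Sz n z X' a b| <= L * W1z n z X X')
  /\
  (* lower Lipschitz in expectation *)
  (exists c : R, 0 < c /\
     forall X X' : seq 'rV[R]_d, multiset_le n Omega X -> multiset_le n Omega X' ->
       0 < W1z n z X X' ->
       ((c `^ p)%:E <=
        E_ab d n (fun (a : 'rV[R]_d) (b : 'rV[R]_n) =>
                ((`|Sz n z X a b - Sz n z X' a b| / W1z n z X X') `^ p)%:E))%E).
Proof.
case: n d Omega z => [|n'] [|d'] Omega z // _ _ p1 _ _; split.
  exists 1 => a b a1 b1 X X' [sX _] [sX' _].
  by rewrite mul1r; exact: Sz_lipschitz.
have [c [c0 c_low]] := Sz_lower_lipschitz_E n' z p1.
by exists c; split=> // X X' [sX _] [sX' _]; exact: c_low.
Qed.
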